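(* Let $k_{ON},k_{OFF},k_I,\alpha_{p_1},\alpha_{p_2},\gamma_{p_1},\gamma_{m_2},\alpha_{m_2,I},\beta_{m_2,A},T_c>0$, $v_b>1$, $n\ge 1$, and set $a_1=k_{ON}$, $a_3=k_{ON}+k_{OFF}$, $a_4=k_I$, $a_5=\alpha_{p_1}$, $a_6=\gamma_{p_1}$, $a_7=\alpha_{m_2,I}$, $a_8=\gamma_{m_2}+\alpha_{p_1}+\alpha_{p_2}$, $a_9=\beta_{m_2,A}/v_b$, $a_{10}=v_b/T_c^n$, $a_{11}=1/T_c^n$. Consider the quasi-steady-state system \[ \begin{aligned} x' &= a_1 + (a_4-a_1)y - \Big(a_3 + a_9\frac{1+a_{10}v^n}{1+a_{11}v^n}\Big)x,\\ y' &= a_9\frac{1+a_{10}v^n}{1+a_{11}v^n}x - a_4 y,\\ v' &= a_5\frac{a_7}{a_8}x - a_6 v. \end{aligned} \] Then its positive steady state $(x^*,y^*,v^* )$ (all components positive) is locally asymptotically stable.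
   Context: Here $x=\mathrm{LTR}_I$, $y=\mathrm{LTR}_A$, $v=\mathrm{Tat}$ in a model of HIV-1 transcription (with $\mathrm{LTR}_R=1-x-y$), obtained by replacing $\mathrm{env}_I$ with its quasi-steady-state value $\frac{a_7}{a_8}x$. *)

From Stdlib Require Import Reals.
From Coquelicot Require Import Coquelicot.
Open Scope R_scope.

Definition hill (a10 a11 : R) (n : nat) (v : R) : R :=
  (1 + a10 * v ^ n) / (1 + a11 * v ^ n).

Definition Fx (a1 a3 a4 a9 a10 a11 : R) (n : nat) (x y v : R) : R :=
  a1 + (a4 - a1) * y - (a3 + a9 * hill a10 a11 n v) * x.
Definition Fy (a4 a9 a10 a11 : R) (n : nat) (x y v : R) : R :=
  a9 * hill a10 a11 n v * x - a4 * y.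
Definition Fv (a5 a6 a7 a8 : R) (x y v : R) : R :=
  a5 * (a7 / a8) * x - a6 * v.

Definition is_sol (fx fy fv : R -> R -> R -> R) (x y v : R -> R) : Prop :=
  (forall t, 0 < t ->
      is_derive x t (fx (x t) (y t) (v t)) /\
      is_derive y t (fy (x t) (y t) (v t)) /\
      is_derive v t (fv (x t) (y t) (v t))) /\
  filterlim x (at_right 0) (locally (x 0)) /\
  filterlim y (at_right 0) (locally (y 0)) /\
  filterlim v (at_right 0) (locally (v 0)).

Definition dist3 (x y v xs ys vs : R) : R :=
  sqrt ((x - xs) ^ 2 + (y - ys) ^ 2 + (v - vs) ^ 2).

Definition loc_asym_stable (fx fy fv : R -> R -> R -> R) (xs ys vs : R) : Prop :=
  (forall eps, 0 < eps -> exists delta, 0 < delta /\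
     forall x y v, is_sol fx fy fv x y v ->
       dist3 (x 0) (y 0) (v 0) xs ys vs < delta ->
       forall t, 0 <= t -> dist3 (x t) (y t) (v t) xs ys vs < eps) /\
  (exists delta, 0 < delta /\
     forall x y v, is_sol fx fy fv x y v ->
       dist3 (x 0) (y 0) (v 0) xs ys vs < delta ->
       forall eps, 0 < eps -> exists T, forall t, T <= t ->
         dist3 (x t) (y t) (v t) xs ys vs < eps).

From Stdlib Require Import Reals Lia Psatz.
From Coquelicot Require Import Coquelicot.
Open Scope R_scope.

(* Write H v = a9 hill(v) and d = a5 a7 / a8. Around an equilibrium (xs, ys, vs), in the
   coordinates xi = x - xs, s = (x + y) - (xs + ys), ze = v - vs, the system reads
     xi' = -(a4 + a3 - a1 + H vs) xi + (a4 - a1) s - x (H v - H vs),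
     s'  = -(a3 - a1) xi - a1 s,
     ze' = d xi - a6 ze,
   and H is increasing. For W = xi^2 + B s^2 + g ze^2, the choice g d = xs H'(vs) cancels the
   xi ze term of the linearised W', and a suitable B makes the remaining (xi, s) block negative
   definite; the nonlinear remainder is small near the equilibrium, so W' <= - kap W on a sublevel
   set of W. Hence W decays exponentially along every solution starting close enough, which gives
   both Lyapunov stability and attractivity. The positive equilibrium itself comes from the
   intermediate value theorem on the v-nullcline. *)

Lemma is_derive_locally_lt (f : R -> R) (t l L : R) :
  is_derive f t l -> f t < L -> exists d, 0 < d /\ forall s, Rabs (s - t) < d -> f s < L.
Proof.
  intros Hf HL.
  assert (Hc : filterlim f (locally t) (locally (f t)))
    by (apply (ex_derive_continuous (K := R_AbsRing) (V := R_NormedModule)); exists l; exact Hf).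
  destruct (Hc (fun u => u < L) (open_lt L (f t) HL)) as [d Hd].
  exists d. split; [apply cond_pos |]. intros s Hs. apply Hd. exact Hs.
Qed.

Lemma exp_weighted_nonincreasing (V dV : R -> R) (kap a b : R) :
  0 < a -> a < b ->
  (forall t, 0 < t -> is_derive V t (dV t)) ->
  (forall t, a < t < b -> kap * V t + dV t <= 0) ->
  exp (kap * b) * V b <= exp (kap * a) * V a.
Proof.
  intros Ha Hab HV Hneg.
  destruct (MVT_cor2 (fun t => exp (kap * t) * V t)
              (fun t => exp (kap * t) * (kap * V t + dV t)) a b Hab) as [c [Hmvt Hc]].
  { intros c Hc. apply is_derive_Reals.
    assert (HVc := HV c ltac:(lra)).
    auto_derive; [exists (dV c); exact HVc |].
    replace (Derive (fun x : R => V x) c) with (dV c) by (symmetry; apply is_derive_unique; exact HVc).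
    ring. }
  assert (Hslope : exp (kap * c) * (kap * V c + dV c) <= 0).
  { pose proof (exp_pos (kap * c)). pose proof (Hneg c Hc). nra. }
  nra.
Qed.

Lemma sublevel_forward_invariant (V dV : R -> R) (L a : R) :
  0 < a ->
  (forall t, 0 < t -> is_derive V t (dV t)) ->
  (forall t, V t < L -> dV t <= 0) ->
  V a < L -> forall t, a <= t -> V t < L.
Proof.
  intros Ha HV Hneg HVa.
  assert (Hmono : forall b, a < b -> (forall s, a < s < b -> V s < L) -> V b <= V a).
  { intros b Hab Hb.
    pose proof (exp_weighted_nonincreasing V dV 0 a b Ha Hab HV) as Hw.
    rewrite !Rmult_0_l, exp_0, !Rmult_1_l in Hw. apply Hw.
    intros s Hs. rewrite Rmult_0_l, Rplus_0_l. apply Hneg, Hb, Hs. }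
  intros t Ht. apply Rnot_le_lt. intros HLt.
  (* the supremum [m] of the times up to which [V] stays below [L] is a first exit time *)
  set (E := fun u => a <= u /\ forall s, a <= s <= u -> V s < L).
  destruct (completeness E) as [m [Hub Hlub]].
  { exists t. intros u [_ Hu]. apply Rnot_lt_le. intros Htu. specialize (Hu t). lra. }
  { exists a. split; [lra |]. intros s Hs. replace s with a by lra. exact HVa. }
  assert (Ham : a <= m).
  { apply Hub. split; [lra |]. intros s Hs. replace s with a by lra. exact HVa. }
  assert (Hbelow : forall s, a <= s < m -> V s < L).
  { intros s Hs. apply Rnot_le_lt. intros HLs.
    enough (m <= s) by lra.
    apply Hlub. intros u [_ Hu]. apply Rnot_lt_le. intros Hsu. specialize (Hu s). lra. }
  assert (Hm : V m < L).
  { destruct (Req_dec m a) as [-> | Hne]; [exact HVa |].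
    enough (V m <= V a) by lra.
    apply Hmono; [lra |]. intros s Hs. apply Hbelow. lra. }
  destruct (is_derive_locally_lt V m (dV m) L (HV m ltac:(lra)) Hm) as [d [Hd HdL]].
  assert (Hmd : E (m + d / 2)).
  { split; [lra |]. intros s Hs.
    destruct (Rlt_or_le s m); [apply Hbelow; lra |].
    apply HdL. rewrite Rabs_right; lra. }
  specialize (Hub _ Hmd). lra.
Qed.

Lemma lyapunov_exp_decay (V dV : R -> R) (kap L a : R) :
  0 < a -> 0 < kap ->
  (forall t, 0 < t -> is_derive V t (dV t)) ->
  (forall t, 0 <= V t) ->
  (forall t, V t < L -> kap * V t + dV t <= 0) ->
  V a < L -> forall t, a <= t -> V t <= exp (- (kap * (t - a))) * V a.
Proof.
  intros Ha Hk HV Hpos Hdec HVa t Ht.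
  assert (Hinv : forall s, a <= s -> V s < L).
  { apply (sublevel_forward_invariant V dV L a Ha HV); [| exact HVa].
    intros s Hs. specialize (Hdec s Hs). specialize (Hpos s). nra. }
  destruct (Req_dec t a) as [-> | Hne].
  { rewrite Rminus_diag, Rmult_0_r, Ropp_0, exp_0. lra. }
  assert (Hw : exp (kap * t) * V t <= exp (kap * a) * V a).
  { apply (exp_weighted_nonincreasing V dV kap a t Ha ltac:(lra) HV).
    intros s Hs. apply Hdec, Hinv. lra. }
  assert (Hinvexp : exp (- (kap * t)) * exp (kap * t) = 1)
    by (rewrite <- exp_plus, Rplus_opp_l; apply exp_0).
  replace (V t) with (exp (- (kap * t)) * (exp (kap * t) * V t))
    by (rewrite <- Rmult_assoc, Hinvexp; ring).
  replace (- (kap * (t - a))) with (- (kap * t) + kap * a) by ring.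
  rewrite exp_plus, Rmult_assoc.
  apply Rmult_le_compat_l; [apply Rlt_le, exp_pos | exact Hw].
Qed.

Lemma exp_neg_eventually_lt (kap r : R) :
  0 < kap -> 0 < r -> exists T, forall s, T <= s -> exp (- (kap * s)) < r.
Proof.
  intros Hk Hr. exists ((Rabs (ln r) + 1) / kap). intros s Hs.
  rewrite <- (exp_ln r Hr). apply exp_increasing.
  assert (Hks : Rabs (ln r) + 1 <= kap * s).
  { replace (Rabs (ln r) + 1) with (kap * ((Rabs (ln r) + 1) / kap)) by (field; lra).
    apply Rmult_le_compat_l; lra. }
  pose proof (Rle_abs (- ln r)) as Habs. rewrite Rabs_Ropp in Habs. lra.
Qed.

Definition sqdist3 (x y v xs ys vs : R) : R :=
  (x - xs) ^ 2 + (y - ys) ^ 2 + (v - vs) ^ 2.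

Lemma sqdist3_nonneg x y v xs ys vs : 0 <= sqdist3 x y v xs ys vs.
Proof.
  unfold sqdist3.
  pose proof (pow2_ge_0 (x - xs)). pose proof (pow2_ge_0 (y - ys)). pose proof (pow2_ge_0 (v - vs)).
  lra.
Qed.

Lemma dist3_lt_of_sqdist3_lt x y v xs ys vs e :
  0 < e -> sqdist3 x y v xs ys vs < e ^ 2 -> dist3 x y v xs ys vs < e.
Proof.
  intros He H. unfold dist3. rewrite <- (sqrt_pow2 e) by lra.
  apply sqrt_lt_1_alt. split; [apply sqdist3_nonneg | exact H].
Qed.

Lemma filterlim_sqr_sub (F : (R -> Prop) -> Prop) {FF : Filter F} (f : R -> R) (l c : R) :
  filterlim f F (locally l) -> filterlim (fun t => (f t - c) ^ 2) F (locally ((l - c) ^ 2)).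
Proof.
  intros Hf. apply (filterlim_comp _ _ _ f (fun u => (u - c) ^ 2) F (locally l)); [exact Hf |].
  apply (ex_derive_continuous (fun u => (u - c) ^ 2)). auto_derive. trivial.
Qed.

Lemma is_sol_sqdist3_lt_near_0 fx fy fv x y v xs ys vs (M T : R) :
  is_sol fx fy fv x y v -> sqdist3 (x 0) (y 0) (v 0) xs ys vs < M -> 0 < T ->
  exists a, 0 < a < T /\ sqdist3 (x a) (y a) (v a) xs ys vs < M.
Proof.
  intros [_ [Hx [Hy Hv]]] H0 HT.
  assert (Hlim : filterlim (fun t => sqdist3 (x t) (y t) (v t) xs ys vs) (at_right 0)
                   (locally (sqdist3 (x 0) (y 0) (v 0) xs ys vs))).
  { unfold sqdist3.
    eapply filterlim_comp_2;
      [| | apply (filterlim_plus (K := R_AbsRing) (V := R_NormedModule))].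
    eapply filterlim_comp_2;
      [| | apply (filterlim_plus (K := R_AbsRing) (V := R_NormedModule))].
    all: apply (filterlim_sqr_sub _ (FF := @filter_filter _ _ (at_right_proper_filter 0)));
      assumption. }
  assert (Hnear : at_right 0 (fun t => sqdist3 (x t) (y t) (v t) xs ys vs < M /\ (0 < t /\ t < T))).
  { apply filter_and.
    - apply (Hlim (fun u => u < M)). apply open_lt. exact H0.
    - exists (mkposreal T HT). intros t Ht Hpos. split; [exact Hpos |].
      apply Rabs_lt_between' in Ht. simpl in Ht. unfold minus, plus, opp in Ht; simpl in Ht. lra. }
  destruct (@Coquelicot.Hierarchy.filter_ex _ _ (at_right_proper_filter 0) _ Hnear) as [a [Ha1 Ha2]].
  exists a. split; assumption.
Qed.

Section LyapunovStability.

Variables (fx fy fv : R -> R -> R -> R) (xs ys vs : R).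
Variables (W dW : R -> R -> R -> R) (kap L c1 c2 : R).
Hypothesis Hkap : 0 < kap.
Hypothesis HL : 0 < L.
Hypothesis Hc1 : 0 < c1.
Hypothesis Hc2 : 0 < c2.
Hypothesis W_nonneg : forall x y v, 0 <= W x y v.
Hypothesis W_le_sqdist3 : forall x y v, W x y v <= c2 * sqdist3 x y v xs ys vs.
Hypothesis sqdist3_le_W : forall x y v, sqdist3 x y v xs ys vs <= c1 * W x y v.
Hypothesis W_decay : forall x y v, W x y v < L -> kap * W x y v + dW x y v <= 0.
Hypothesis is_derive_W_sol : forall x y v, is_sol fx fy fv x y v -> forall t, 0 < t ->
  is_derive (fun t => W (x t) (y t) (v t)) t (dW (x t) (y t) (v t)).

Lemma is_sol_W_exp_decay x y v a :
  is_sol fx fy fv x y v -> 0 < a -> W (x a) (y a) (v a) < L ->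
  forall t, a <= t -> W (x t) (y t) (v t) <= exp (- (kap * (t - a))) * W (x a) (y a) (v a).
Proof.
  intros Hs Ha HWa.
  apply (lyapunov_exp_decay (fun t => W (x t) (y t) (v t)) (fun t => dW (x t) (y t) (v t))
           kap L a Ha Hkap (is_derive_W_sol x y v Hs)); [| | exact HWa].
  - intros t. apply W_nonneg.
  - intros t. apply W_decay.
Qed.

Lemma is_sol_enters_W_sublevel x y v (M T : R) :
  is_sol fx fy fv x y v -> 0 < M -> 0 < T ->
  dist3 (x 0) (y 0) (v 0) xs ys vs < sqrt (M / c2) ->
  exists a, 0 < a < T /\ W (x a) (y a) (v a) < M.
Proof.
  intros Hs HM HT H0.
  destruct (is_sol_sqdist3_lt_near_0 fx fy fv x y v xs ys vs (M / c2) T Hs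
              (sqrt_lt_0_alt _ _ H0) HT) as [a [Ha Hsq]].
  exists a. split; [exact Ha |].
  eapply Rle_lt_trans; [apply W_le_sqdist3 |].
  replace M with (c2 * (M / c2)) by (field; lra).
  apply Rmult_lt_compat_l; assumption.
Qed.

Theorem loc_asym_stable_of_lyapunov : loc_asym_stable fx fy fv xs ys vs.
Proof.
  split.
  - intros e He.
    set (M := Rmin L (e ^ 2 / c1)).
    assert (HM : 0 < M) by (apply Rmin_pos; [lra | apply Rdiv_lt_0_compat; nra]).
    exists (Rmin e (sqrt (M / c2))).
    split; [apply Rmin_pos; [lra | apply sqrt_lt_R0, Rdiv_lt_0_compat; lra] |].
    intros x y v Hs H0 t Ht.
    destruct (Req_dec t 0) as [-> | Htn].
    { eapply Rlt_le_trans; [exact H0 | apply Rmin_l]. }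
    destruct (is_sol_enters_W_sublevel x y v M t Hs HM ltac:(lra)
                (Rlt_le_trans _ _ _ H0 (Rmin_r _ _))) as [a [Ha HWa]].
    assert (Hexp : exp (- (kap * (t - a))) < 1).
    { rewrite <- exp_0. apply exp_increasing. nra. }
    assert (HWt : W (x t) (y t) (v t) <= W (x a) (y a) (v a)).
    { eapply Rle_trans.
      - apply (is_sol_W_exp_decay x y v a Hs); [lra | | lra].
        eapply Rlt_le_trans; [exact HWa | apply Rmin_l].
      - pose proof (W_nonneg (x a) (y a) (v a)). nra. }
    apply dist3_lt_of_sqdist3_lt; [exact He |].
    eapply Rle_lt_trans; [apply sqdist3_le_W |].
    replace (e ^ 2) with (c1 * (e ^ 2 / c1)) by (field; lra).
    apply Rmult_lt_compat_l; [exact Hc1 |].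
    eapply Rle_lt_trans; [exact HWt |]. eapply Rlt_le_trans; [exact HWa | apply Rmin_r].
  - exists (sqrt (L / c2)). split; [apply sqrt_lt_R0, Rdiv_lt_0_compat; lra |].
    intros x y v Hs H0 e He.
    destruct (is_sol_enters_W_sublevel x y v L 1 Hs HL Rlt_0_1 H0) as [a [Ha HWa]].
    assert (Hr : 0 < e ^ 2 / (c1 * L)) by (apply Rdiv_lt_0_compat; nra).
    destruct (exp_neg_eventually_lt kap _ Hkap Hr) as [T HT].
    exists (a + Rabs T). intros t Ht.
    pose proof (Rabs_pos T). pose proof (Rle_abs T).
    assert (HWt := is_sol_W_exp_decay x y v a Hs ltac:(lra) HWa t ltac:(lra)).
    assert (Hexp := HT (t - a) ltac:(lra)).
    pose proof (exp_pos (- (kap * (t - a)))).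
    pose proof (W_nonneg (x a) (y a) (v a)).
    apply dist3_lt_of_sqdist3_lt; [exact He |].
    eapply Rle_lt_trans; [apply sqdist3_le_W |].
    replace (e ^ 2) with (c1 * (e ^ 2 / (c1 * L) * L)) by (field; lra).
    apply Rmult_lt_compat_l; [exact Hc1 |].
    eapply Rle_lt_trans; [exact HWt |]. nra.
Qed.

End LyapunovStability.

Lemma quad_form_lower_bound (a b c x y : R) :
  0 < a + c ->
  (a * c - b ^ 2) / (a + c) * (x ^ 2 + y ^ 2) <= a * x ^ 2 + 2 * b * x * y + c * y ^ 2.
Proof.
  intros Hac.
  apply (Rmult_le_reg_l (a + c)); [exact Hac |].
  replace ((a + c) * ((a * c - b ^ 2) / (a + c) * (x ^ 2 + y ^ 2)))
    with ((a * c - b ^ 2) * (x ^ 2 + y ^ 2)) by (field; lra).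
  (* the difference is (a x + b y)^2 + (b x + c y)^2 *)
  pose proof (pow2_ge_0 (a * x + b * y)). pose proof (pow2_ge_0 (b * x + c * y)).
  nra.
Qed.

Lemma two_mul_le_of_abs_le (x u z e : R) :
  0 <= e -> Rabs u <= e * Rabs z -> 2 * x * u <= e * (x ^ 2 + z ^ 2).
Proof.
  intros He Hu.
  rewrite <- (pow2_abs x), <- (pow2_abs z).
  pose proof (Rabs_pos x). pose proof (Rabs_pos z).
  assert (Hxu : 2 * x * u <= 2 * Rabs x * Rabs u).
  { rewrite <- (Rabs_right 2) at 2 by lra. rewrite <- !Rabs_mult. apply Rle_abs. }
  assert (Hsq : 0 <= e * (Rabs x - Rabs z) ^ 2) by (apply Rmult_le_pos; [exact He | apply pow2_ge_0]).
  nra.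
Qed.

Lemma Rabs_lt_of_pow2_lt (a r : R) : 0 < r -> a ^ 2 < r ^ 2 -> Rabs a < r.
Proof.
  intros Hr Ha. rewrite <- (Rabs_right r) by lra.
  apply Rsqr_lt_abs_0. unfold Rsqr. lra.
Qed.

Lemma is_derive_increment_bound (f : R -> R) (x0 l eps : R) :
  is_derive f x0 l -> 0 < eps ->
  exists r, 0 < r /\ forall x, Rabs (x - x0) < r ->
    Rabs (f x - f x0 - l * (x - x0)) <= eps * Rabs (x - x0).
Proof.
  intros Hf He.
  apply is_derive_Reals in Hf.
  destruct (Hf eps He) as [r Hr].
  exists r. split; [apply cond_pos |]. intros x Hx.
  destruct (Req_dec x x0) as [-> | Hne].
  { rewrite !Rminus_diag, Rmult_0_r, Rminus_0_r, Rabs_R0. lra. }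
  specialize (Hr (x - x0) ltac:(lra) Hx).
  replace (x0 + (x - x0)) with x in Hr by ring.
  replace (f x - f x0 - l * (x - x0)) with ((x - x0) * ((f x - f x0) / (x - x0) - l))
    by (field; lra).
  rewrite Rabs_mult, Rmult_comm. apply Rmult_le_compat_r; [apply Rabs_pos | lra].
Qed.

Lemma mul_increment_bound (f : R -> R) (x0 v0 l eps : R) :
  is_derive f v0 l -> 0 < eps ->
  exists r, 0 < r /\ forall x v, Rabs (x - x0) < r -> Rabs (v - v0) < r ->
    Rabs (x * (f v - f v0) - x0 * l * (v - v0)) <= eps * Rabs (v - v0).
Proof.
  intros Hf He.
  set (e1 := eps / (2 * (Rabs x0 + 1))).
  set (e2 := eps / (2 * (Rabs l + 1))).
  pose proof (Rabs_pos x0). pose proof (Rabs_pos l).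
  assert (He1 : 0 < e1) by (apply Rdiv_lt_0_compat; lra).
  assert (He2 : 0 < e2) by (apply Rdiv_lt_0_compat; lra).
  destruct (is_derive_increment_bound f v0 l e1 Hf He1) as [r1 [Hr1 Hinc]].
  exists (Rmin 1 (Rmin r1 e2)).
  split; [repeat apply Rmin_pos; lra |].
  intros x v Hx Hv.
  pose proof (Rmin_l 1 (Rmin r1 e2)). pose proof (Rmin_r 1 (Rmin r1 e2)).
  pose proof (Rmin_l r1 e2). pose proof (Rmin_r r1 e2).
  assert (Hxb : Rabs x <= Rabs x0 + 1).
  { replace x with (x0 + (x - x0)) by ring. eapply Rle_trans; [apply Rabs_triang | lra]. }
  assert (Hlin := Hinc v ltac:(lra)).
  replace (x * (f v - f v0) - x0 * l * (v - v0))
    with (x * (f v - f v0 - l * (v - v0)) + (x - x0) * l * (v - v0)) by ring.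
  eapply Rle_trans; [apply Rabs_triang |]. rewrite !Rabs_mult.
  pose proof (Rabs_pos (v - v0)). pose proof (Rabs_pos (x - x0)).
  set (z := Rabs (v - v0)) in *.
  assert (T1 : Rabs x * Rabs (f v - f v0 - l * (v - v0)) <= (Rabs x0 + 1) * (e1 * z))
    by (apply Rmult_le_compat; [apply Rabs_pos | apply Rabs_pos | exact Hxb | exact Hlin]).
  assert (T2 : Rabs (x - x0) * Rabs l <= e2 * (Rabs l + 1)) by (apply Rmult_le_compat; lra).
  assert (E1 : (Rabs x0 + 1) * e1 = eps / 2) by (unfold e1; field; lra).
  assert (E2 : e2 * (Rabs l + 1) = eps / 2) by (unfold e2; field; lra).
  nra.
Qed.

(* The system with the Tat feedback [a9 * hill a10 a11 n] replaced by an arbitrary [H]: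
   [Fx], [Fy], [Fv] are [Gx], [Gy], [Gv] for [H v = a9 * hill a10 a11 n v] and [d = a5 * (a7 / a8)]. *)
Definition Gx (a1 a3 a4 : R) (H : R -> R) (x y v : R) : R :=
  a1 + (a4 - a1) * y - (a3 + H v) * x.
Definition Gy (a4 : R) (H : R -> R) (x y v : R) : R := H v * x - a4 * y.
Definition Gv (d a6 : R) (x y v : R) : R := d * x - a6 * v.

Section FeedbackStability.

Variables (a1 a3 a4 d a6 : R) (H : R -> R) (xs ys vs Hp : R).
Hypothesis Ha1 : 0 < a1.
Hypothesis Ha13 : a1 < a3.
Hypothesis Ha4 : 0 < a4.
Hypothesis Hd : 0 < d.
Hypothesis Ha6 : 0 < a6.
Hypothesis Hxs : 0 < xs.
Hypothesis HHvs : 0 <= H vs.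
Hypothesis HHp : 0 < Hp.
Hypothesis HHderiv : is_derive H vs Hp.
Hypothesis Ex : Gx a1 a3 a4 H xs ys vs = 0.
Hypothesis Ey : Gy a4 H xs ys vs = 0.
Hypothesis Ev : Gv d a6 xs ys vs = 0.

Let k := a3 - a1.
Let p := a4 + k + H vs.
Let q := a4 - a1.
Let B := (q * k + 2 * p * a1) / k ^ 2.
Let g := xs * Hp / d.

Let W (x y v : R) : R :=
  (x - xs) ^ 2 + B * (x + y - (xs + ys)) ^ 2 + g * (v - vs) ^ 2.
Let dW (x y v : R) : R :=
  2 * (x - xs) * Gx a1 a3 a4 H x y v
  + 2 * B * (x + y - (xs + ys)) * (Gx a1 a3 a4 H x y v + Gy a4 H x y v)
  + 2 * g * (v - vs) * Gv d a6 x y v.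

Let k_pos : 0 < k. Proof. unfold k. lra. Qed.
Let p_pos : 0 < p. Proof. unfold p. pose proof k_pos. lra. Qed.
Let B_pos : 0 < B.
Proof.
  unfold B. pose proof k_pos. pose proof p_pos.
  apply Rdiv_lt_0_compat; [| apply pow_lt; lra].
  (* q k + 2 p a1 = a4 a3 + a1 (H vs + p) *)
  unfold q, p, k in *. nra.
Qed.
Let g_pos : 0 < g.
Proof. unfold g. apply Rdiv_lt_0_compat; [apply Rmult_lt_0_compat |]; assumption. Qed.

Let Gx_error x y v :
  Gx a1 a3 a4 H x y v = - p * (x - xs) + q * (x + y - (xs + ys)) - x * (H v - H vs).
Proof.
  transitivity (Gx a1 a3 a4 H x y v - Gx a1 a3 a4 H xs ys vs); [rewrite Ex; ring |].
  unfold Gx, p, q, k. ring.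
Qed.

Let Gxy_error x y v :
  Gx a1 a3 a4 H x y v + Gy a4 H x y v = - k * (x - xs) - a1 * (x + y - (xs + ys)).
Proof.
  transitivity (Gx a1 a3 a4 H x y v + Gy a4 H x y v
                - (Gx a1 a3 a4 H xs ys vs + Gy a4 H xs ys vs)); [rewrite Ex, Ey; ring |].
  unfold Gx, Gy, k. ring.
Qed.

Let Gv_error x y v : Gv d a6 x y v = d * (x - xs) - a6 * (v - vs).
Proof.
  transitivity (Gv d a6 x y v - Gv d a6 xs ys vs); [rewrite Ev; ring |].
  unfold Gv. ring.
Qed.

(* [g] is chosen so that [g d = xs Hp]: the linear [x]-[v] coupling of [dW] cancels. *)
Let dW_eq x y v :
  dW x y v =
  - (2 * p * (x - xs) ^ 2 + 2 * (B * k - q) * (x - xs) * (x + y - (xs + ys))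
     + 2 * B * a1 * (x + y - (xs + ys)) ^ 2)
  - 2 * g * a6 * (v - vs) ^ 2
  + 2 * (x - xs) * (xs * Hp * (v - vs) - x * (H v - H vs)).
Proof.
  unfold dW. rewrite Gxy_error, Gx_error, Gv_error. unfold g. field. lra.
Qed.

(* [B] maximises [4 p a1 B - (B k - q)^2]; the maximum is [4 p a1 (q k + p a1) / k^2]. *)
Let dW_discriminant_pos : (B * k - q) ^ 2 < (2 * p) * (2 * B * a1).
Proof.
  pose proof k_pos. pose proof p_pos.
  assert (Hdisc : (2 * p) * (2 * B * a1) - (B * k - q) ^ 2 = 4 * p * a1 * (q * k + p * a1) / k ^ 2)
    by (unfold B; field; lra).
  enough (0 < 4 * p * a1 * (q * k + p * a1) / k ^ 2) by lra.
  apply Rdiv_lt_0_compat; [| apply pow_lt; lra].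
  assert (0 < q * k + p * a1) by (unfold q, p, k in *; nra).
  repeat apply Rmult_lt_0_compat; lra.
Qed.

Let W_nonneg x y v : 0 <= W x y v.
Proof.
  unfold W. pose proof B_pos. pose proof g_pos.
  pose proof (pow2_ge_0 (x - xs)). pose proof (pow2_ge_0 (x + y - (xs + ys))).
  pose proof (pow2_ge_0 (v - vs)).
  nra.
Qed.

Let W_le_sqdist3 x y v : W x y v <= 3 * (1 + B + g) * sqdist3 x y v xs ys vs.
Proof.
  unfold W, sqdist3. pose proof B_pos. pose proof g_pos.
  replace (x + y - (xs + ys)) with ((x - xs) + (y - ys)) by ring.
  set (xi := x - xs). set (eta := y - ys). set (ze := v - vs).
  pose proof (pow2_ge_0 xi). pose proof (pow2_ge_0 eta). pose proof (pow2_ge_0 ze).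
  assert ((xi + eta) ^ 2 <= 2 * xi ^ 2 + 2 * eta ^ 2) by (pose proof (pow2_ge_0 (xi - eta)); nra).
  nra.
Qed.

Let sqdist3_le_W x y v : sqdist3 x y v xs ys vs <= (3 + 2 / B + 1 / g) * W x y v.
Proof.
  unfold W, sqdist3. pose proof B_pos. pose proof g_pos.
  replace (x + y - (xs + ys)) with ((x - xs) + (y - ys)) by ring.
  set (xi := x - xs). set (eta := y - ys). set (ze := v - vs).
  set (Wv := xi ^ 2 + B * (xi + eta) ^ 2 + g * ze ^ 2).
  pose proof (pow2_ge_0 xi). pose proof (pow2_ge_0 (xi + eta)). pose proof (pow2_ge_0 ze).
  assert (0 <= B * (xi + eta) ^ 2) by nra. assert (0 <= g * ze ^ 2) by nra.
  assert (Hs : (xi + eta) ^ 2 <= Wv / B).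
  { replace ((xi + eta) ^ 2) with (B * (xi + eta) ^ 2 / B) by (field; lra).
    apply Rmult_le_compat_r; [apply Rlt_le, Rinv_0_lt_compat |]; unfold Wv; lra. }
  assert (Hz : ze ^ 2 <= Wv / g).
  { replace (ze ^ 2) with (g * ze ^ 2 / g) by (field; lra).
    apply Rmult_le_compat_r; [apply Rlt_le, Rinv_0_lt_compat |]; unfold Wv; lra. }
  assert (eta ^ 2 <= 2 * (xi + eta) ^ 2 + 2 * xi ^ 2) by (pose proof (pow2_ge_0 (xi + eta + xi)); nra).
  replace ((3 + 2 / B + 1 / g) * Wv) with (3 * Wv + 2 * (Wv / B) + Wv / g) by (field; lra).
  unfold Wv in *. lra.
Qed.

Let is_derive_W_sol x y v :
  is_sol (Gx a1 a3 a4 H) (Gy a4 H) (Gv d a6) x y v -> forall t, 0 < t ->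
  is_derive (fun t => W (x t) (y t) (v t)) t (dW (x t) (y t) (v t)).
Proof.
  intros [Hder _] t Ht. destruct (Hder t Ht) as [Hx [Hy Hv]].
  unfold W, dW. auto_derive.
  - repeat split; eexists; eassumption.
  - replace (Derive (fun s => x s) t) with (Gx a1 a3 a4 H (x t) (y t) (v t))
      by (symmetry; apply is_derive_unique; exact Hx).
    replace (Derive (fun s => y s) t) with (Gy a4 H (x t) (y t) (v t))
      by (symmetry; apply is_derive_unique; exact Hy).
    replace (Derive (fun s => v s) t) with (Gv d a6 (x t) (y t) (v t))
      by (symmetry; apply is_derive_unique; exact Hv).
    ring.
Qed.

Let W_decay :
  exists kap L, 0 < kap /\ 0 < L /\
    forall x y v, W x y v < L -> kap * W x y v + dW x y v <= 0.
Proof.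
  pose proof k_pos. pose proof p_pos. pose proof B_pos. pose proof g_pos.
  set (lam := ((2 * p) * (2 * B * a1) - (B * k - q) ^ 2) / (2 * p + 2 * B * a1)).
  assert (Hlam : 0 < lam).
  { pose proof dW_discriminant_pos. apply Rdiv_lt_0_compat; nra. }
  pose proof (Rmin_l lam (2 * g * a6)). pose proof (Rmin_r lam (2 * g * a6)).
  set (rho := Rmin lam (2 * g * a6)) in *.
  assert (Hrho : 0 < rho) by (apply Rmin_pos; nra).
  destruct (mul_increment_bound H xs vs Hp (rho / 2) HHderiv ltac:(lra)) as [r [Hr Hphi]].
  exists (rho / (2 * (1 + B + g))), (Rmin (r ^ 2) (g * r ^ 2)).
  split; [apply Rdiv_lt_0_compat; lra |].
  assert (Hr2 : 0 < r ^ 2) by (apply pow_lt; lra).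
  split; [apply Rmin_pos; [| apply Rmult_lt_0_compat]; lra |].
  intros x y v HW.
  pose proof (Rmin_l (r ^ 2) (g * r ^ 2)). pose proof (Rmin_r (r ^ 2) (g * r ^ 2)).
  rewrite dW_eq. unfold W in *.
  set (xi := x - xs) in *. set (s := x + y - (xs + ys)) in *. set (ze := v - vs) in *.
  pose proof (pow2_ge_0 xi). pose proof (pow2_ge_0 s). pose proof (pow2_ge_0 ze).
  assert (0 <= B * s ^ 2) by nra. assert (0 <= g * ze ^ 2) by nra.
  assert (Hxi : Rabs xi < r) by (apply Rabs_lt_of_pow2_lt; lra).
  assert (Hze : Rabs ze < r) by (apply Rabs_lt_of_pow2_lt; nra).
  assert (Hquad := quad_form_lower_bound (2 * p) (B * k - q) (2 * B * a1) xi s ltac:(nra)).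
  fold lam in Hquad.
  assert (Hcross : 2 * xi * (xs * Hp * ze - x * (H v - H vs)) <= rho / 2 * (xi ^ 2 + ze ^ 2)).
  { apply two_mul_le_of_abs_le; [lra |].
    rewrite Rabs_minus_sym. replace (xs * Hp * ze) with (xs * Hp * (v - vs)) by reflexivity.
    apply Hphi; assumption. }
  assert (HWle : xi ^ 2 + B * s ^ 2 + g * ze ^ 2 <= (1 + B + g) * (xi ^ 2 + s ^ 2 + ze ^ 2)) by nra.
  assert (Hkap : rho / (2 * (1 + B + g)) * (xi ^ 2 + B * s ^ 2 + g * ze ^ 2)
                 <= rho / 2 * (xi ^ 2 + s ^ 2 + ze ^ 2)).
  { replace (rho / 2 * (xi ^ 2 + s ^ 2 + ze ^ 2))
      with (rho / (2 * (1 + B + g)) * ((1 + B + g) * (xi ^ 2 + s ^ 2 + ze ^ 2))) by (field; lra).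
    apply Rmult_le_compat_l; [apply Rlt_le, Rdiv_lt_0_compat |]; lra. }
  assert (0 <= (lam - rho) * (xi ^ 2 + s ^ 2)) by (apply Rmult_le_pos; lra).
  assert (0 <= (2 * g * a6 - rho) * ze ^ 2) by (apply Rmult_le_pos; lra).
  nra.
Qed.

Theorem feedback_loc_asym_stable : loc_asym_stable (Gx a1 a3 a4 H) (Gy a4 H) (Gv d a6) xs ys vs.
Proof.
  destruct W_decay as [kap [L [Hkap [HL Hdecay]]]].
  pose proof B_pos. pose proof g_pos.
  apply (loc_asym_stable_of_lyapunov _ _ _ _ _ _ W dW kap L (3 + 2 / B + 1 / g) (3 * (1 + B + g))
           Hkap HL); try assumption.
  - assert (0 < 2 / B) by (apply Rdiv_lt_0_compat; lra).
    assert (0 < 1 / g) by (apply Rdiv_lt_0_compat; lra).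
    lra.
  - lra.
Qed.

End FeedbackStability.

Lemma feedback_positive_equilibrium (a1 a3 a4 d a6 : R) (H : R -> R) :
  0 < a1 -> a1 < a3 -> 0 < a4 -> 0 < d -> 0 < a6 ->
  (forall v, 0 <= v -> 0 < H v) -> (forall v, 0 <= v -> continuous H v) ->
  exists xs ys vs, 0 < xs /\ 0 < ys /\ 0 < vs /\
    Gx a1 a3 a4 H xs ys vs = 0 /\ Gy a4 H xs ys vs = 0 /\ Gv d a6 xs ys vs = 0.
Proof.
  intros Ha1 Ha13 Ha4 Hd Ha6 Hpos Hcont.
  (* on the [v]-nullcline, [x] solves [f x = 0] and then [y = H v x / a4] *)
  set (c := d / a6).
  assert (Hc : 0 < c) by (apply Rdiv_lt_0_compat; lra).
  set (f := fun x => x * (a3 * a4 + a1 * H (c * x)) - a1 * a4).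
  assert (Hfcont : forall x, 0 <= x <= a1 / a3 -> continuity_pt f x).
  { intros x Hx. apply continuity_pt_filterlim.
    apply (continuous_minus (fun x => x * (a3 * a4 + a1 * H (c * x))) (fun _ => a1 * a4));
      [| apply continuous_const].
    apply (continuous_mult (fun x => x) (fun x => a3 * a4 + a1 * H (c * x))); [apply continuous_id |].
    apply (continuous_plus (fun _ => a3 * a4) (fun x => a1 * H (c * x))); [apply continuous_const |].
    apply (continuous_mult (fun _ => a1) (fun x => H (c * x))); [apply continuous_const |].
    apply (continuous_comp (fun x => c * x) H).
    - apply (continuous_mult (fun _ => c) (fun x => x)); [apply continuous_const | apply continuous_id].
    - apply Hcont. nra. }
  assert (Hbound : 0 < a1 / a3) by (apply Rdiv_lt_0_compat; lra).
  assert (Hf0 : f 0 < 0) by (unfold f; nra).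
  assert (Hf1 : 0 < f (a1 / a3)).
  { unfold f. pose proof (Hpos (c * (a1 / a3)) ltac:(nra)).
    replace (a1 / a3 * (a3 * a4 + a1 * H (c * (a1 / a3))) - a1 * a4)
      with (a1 / a3 * (a1 * H (c * (a1 / a3)))) by (field; lra).
    apply Rmult_lt_0_compat; [exact Hbound | apply Rmult_lt_0_compat; lra]. }
  destruct (Ranalysis5.IVT_interv f 0 (a1 / a3) Hfcont Hbound Hf0 Hf1) as [xs [Hxs Hfxs]].
  assert (Hxs0 : 0 < xs) by (destruct (Req_dec xs 0) as [-> | ]; lra).
  set (vs := c * xs). set (ys := H vs * xs / a4).
  assert (HHvs : 0 < H vs) by (apply Hpos; unfold vs; nra).
  exists xs, ys, vs.
  split; [exact Hxs0 |]. split; [apply Rdiv_lt_0_compat; nra |]. split; [unfold vs; nra |].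
  unfold f in Hfxs. fold vs in Hfxs.
  split; [| split].
  - unfold Gx, ys. apply (Rmult_eq_reg_l a4); [| lra]. field_simplify; [nra | lra].
  - unfold Gy, ys. field. lra.
  - unfold Gv, vs, c. field. lra.
Qed.

Lemma hill_pos (a10 a11 : R) (n : nat) (v : R) :
  0 < a10 -> 0 < a11 -> 0 <= v -> 0 < hill a10 a11 n v.
Proof.
  intros H10 H11 Hv. unfold hill. pose proof (pow_le v n Hv).
  apply Rdiv_lt_0_compat; nra.
Qed.

Definition hill_deriv (a10 a11 : R) (n : nat) (v : R) : R :=
  INR n * v ^ pred n * (a10 - a11) / (1 + a11 * v ^ n) ^ 2.

Lemma is_derive_hill (a10 a11 : R) (n : nat) (v : R) :
  0 < a11 -> 0 <= v -> is_derive (hill a10 a11 n) v (hill_deriv a10 a11 n v).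
Proof.
  intros H11 Hv. pose proof (pow_le v n Hv).
  unfold hill, hill_deriv. auto_derive; [nra |]. field. nra.
Qed.

Lemma hill_deriv_pos (a10 a11 : R) (n : nat) (v : R) :
  0 < a11 -> a11 < a10 -> (1 <= n)%nat -> 0 < v -> 0 < hill_deriv a10 a11 n v.
Proof.
  intros H11 H1011 Hn Hv. unfold hill_deriv.
  pose proof (pow_lt v n Hv). pose proof (pow_lt v (pred n) Hv).
  assert (0 < INR n) by (apply lt_0_INR; lia).
  apply Rdiv_lt_0_compat; [repeat apply Rmult_lt_0_compat | apply pow_lt]; nra.
Qed.

Theorem mainTheorem6 :
  forall (kON kOFF kI alpha_p1 alpha_p2 gamma_p1 gamma_m2 alpha_m2I beta_m2A Tc vb : R)
         (n : nat),
    0 < kON -> 0 < kOFF -> 0 < kI -> 0 < alpha_p1 -> 0 < alpha_p2 ->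
    0 < gamma_p1 -> 0 < gamma_m2 -> 0 < alpha_m2I -> 0 < beta_m2A -> 0 < Tc ->
    1 < vb -> (1 <= n)%nat ->
    let a1 := kON in
    let a3 := kON + kOFF in
    let a4 := kI in
    let a5 := alpha_p1 in
    let a6 := gamma_p1 in
    let a7 := alpha_m2I in
    let a8 := gamma_m2 + alpha_p1 + alpha_p2 in
    let a9 := beta_m2A / vb in
    let a10 := vb / Tc ^ n in
    let a11 := 1 / Tc ^ n in
    let fx := Fx a1 a3 a4 a9 a10 a11 n in
    let fy := Fy a4 a9 a10 a11 n in
    let fv := Fv a5 a6 a7 a8 in
    (exists xs ys vs, 0 < xs /\ 0 < ys /\ 0 < vs /\
       fx xs ys vs = 0 /\ fy xs ys vs = 0 /\ fv xs ys vs = 0) /\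
    (forall xs ys vs, 0 < xs -> 0 < ys -> 0 < vs ->
       fx xs ys vs = 0 -> fy xs ys vs = 0 -> fv xs ys vs = 0 ->
       loc_asym_stable fx fy fv xs ys vs).
Proof.
  intros kON kOFF kI alpha_p1 alpha_p2 gamma_p1 gamma_m2 alpha_m2I beta_m2A Tc vb n
    HON HOFF HI Hp1 Hp2 Hg1 Hm2 HmI HmA HTc Hvb Hn a1 a3 a4 a5 a6 a7 a8 a9 a10 a11 fx fy fv.
  assert (Ha13 : a1 < a3) by (unfold a1, a3; lra).
  assert (HT : 0 < Tc ^ n) by (apply pow_lt; exact HTc).
  assert (Ha9 : 0 < a9) by (apply Rdiv_lt_0_compat; lra).
  assert (Ha11 : 0 < a11) by (apply Rdiv_lt_0_compat; lra).
  assert (Ha1011 : a11 < a10) by (apply Rmult_lt_compat_r; [apply Rinv_0_lt_compat |]; lra).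
  assert (Hd : 0 < a5 * (a7 / a8))
    by (apply Rmult_lt_0_compat; [| apply Rdiv_lt_0_compat]; unfold a5, a7, a8; lra).
  set (H := fun v => a9 * hill a10 a11 n v).
  assert (HH : forall v, 0 <= v -> 0 < H v)
    by (intros v Hv; apply Rmult_lt_0_compat; [exact Ha9 | apply hill_pos; lra]).
  assert (HHderiv : forall v, 0 <= v -> is_derive H v (a9 * hill_deriv a10 a11 n v))
    by (intros v Hv; apply is_derive_scal, is_derive_hill; assumption).
  split.
  - apply (feedback_positive_equilibrium a1 a3 a4 (a5 * (a7 / a8)) a6 H HON Ha13 HI Hd Hg1 HH).
    intros v Hv. apply (ex_derive_continuous (K := R_AbsRing) (V := R_NormedModule)).
    eexists. apply HHderiv, Hv.
  - intros xs ys vs Hxs _ Hvs Ex Ey Ev.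
    apply (feedback_loc_asym_stable a1 a3 a4 (a5 * (a7 / a8)) a6 H xs ys vs
             (a9 * hill_deriv a10 a11 n vs) HON Ha13 HI Hd Hg1 Hxs); try assumption.
    + apply Rlt_le, HH. lra.
    + apply Rmult_lt_0_compat; [exact Ha9 | apply hill_deriv_pos; assumption].
    + apply HHderiv. lra.
Qed.
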